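(* Let $k\ge 1$ and let $v_0,\pi_1,v_1,\dots,\pi_k$ be generated by Approximate Value Iteration with errors $\epsilon_1,\dots,\epsilon_{k-1}$ (for any choice of greedy policies at each step). Let $\epsilon=\max_{1\le j<k}\operatorname{span}(\epsilon_j)$ (with $\epsilon=0$ if $k=1$). Then $$\|v_*-v_{\pi_k}\|_\infty \le \frac{1}{1-\gamma}\left(\frac{\gamma-\gamma^k}{1-\gamma}\,\epsilon+\gamma^k\operatorname{span}(v_*-v_0)\right).$$
   Context: A Markov Decision Process with finite state space $S$, finite action space $A$, reward function $r(s,a)$, transition probabilities $p(s'|s,a)$ and discount factor $\gamma\in[0,1)$. For a (deterministic, stationary) policy $\pi:S\to A$, let $r_\pi(s)=r(s,\pi(s))$, let $P_\pi$ be the stochastic matrix $P_\pi(s,s')=p(s'|s,\pi(s))$, and let $T_\pi v=r_\pi+\gamma P_\pi v$ be the Bellman operator of $\pi$; $v_\pi$ is its unique fixed point (the expected $\gamma$-discounted total reward of $\pi$). The Bellman optimality operator is $Tv=\max_\pi T_\pi v$ (componentwise), $v_*$ is its fixed point (the optimal value), and a policy $\pi$ is greedy with respect to $v$ if $T_\pi v=Tv$. For a function $f:S\to\mathbb R$, $\operatorname{span}(f)=\max_s f(s)-\min_s f(s)$. Approximate Value Iteration: starting from an arbitrary $v_0:S\to\mathbb R$, for $j\ge 0$ pick any policy $\pi_{j+1}$ greedy with respect to $v_j$ and set $v_{j+1}=T_{\pi_{j+1}}v_j+\epsilon_{j+1}$, where $\epsilon_{j+1}:S\to\mathbb R$ are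 arbitrary error terms. *)

From HB Require Import structures.
From mathcomp Require Import all_boot all_order all_algebra.
Set Implicit Arguments. Unset Strict Implicit. Unset Printing Implicit Defensive.
Import Order.TTheory GRing.Theory Num.Theory.
Local Open Scope ring_scope.

Section MDP.
Variables (R : realFieldType) (S A : finType).

(* p s a s' = p(s'|s,a) is a stochastic kernel *)
Definition stochastic (p : S -> A -> S -> R) : Prop :=
  (forall s a s', 0 <= p s a s') /\ (forall s a, \sum_(s' : S) p s a s' = 1).

Definition qval (r : S -> A -> R) (p : S -> A -> S -> R) (gamma : R)
    (v : S -> R) (s : S) (a : A) : R :=
  r s a + gamma * \sum_(s' : S) p s a s' * v s'.

Definition Tpol r p gamma (pi : S -> A) (v : S -> R) : S -> R :=
  fun s => qval r p gamma v s (pi s).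

Definition is_max (x : R) (F : A -> R) : Prop :=
  (exists a, x = F a) /\ (forall a, F a <= x).

(* (T v)(s) = max_pi (T_pi v)(s) = max_a qval v s a, componentwise;
   "w = T v" is stated as: w s is the max over actions for every s. *)
Definition is_Tv r p gamma (v w : S -> R) : Prop :=
  forall s, is_max (w s) (qval r p gamma v s).

Definition is_opt_value r p gamma (v : S -> R) : Prop := is_Tv r p gamma v v.

Definition is_policy_value r p gamma (pi : S -> A) (v : S -> R) : Prop :=
  forall s, v s = Tpol r p gamma pi v s.

Definition greedy r p gamma (pi : S -> A) (v : S -> R) : Prop :=
  is_Tv r p gamma v (Tpol r p gamma pi v).

(* span f = max_s f s - min_s f s = max_{s,s'} (f s - f s') (0 if S empty) *)
Definition spanf (f : S -> R) : R :=
  \big[Num.max/0]_(s : S) \big[Num.max/0]_(s' : S) (f s - f s').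

Definition supnorm (f : S -> R) : R := \big[Num.max/0]_(s : S) `|f s|.

End MDP.

From HB Require Import structures.
From mathcomp Require Import all_boot all_order all_algebra.
From mathcomp Require Import ring lra.
Set Implicit Arguments. Unset Strict Implicit. Unset Printing Implicit Defensive.
Import Order.TTheory GRing.Theory Num.Theory.
Local Open Scope ring_scope.

(* Write E_{s,a} f for the average of f under p(.|s,a).  If pi is greedy
   with respect to u and v_* is optimal, then v_* - T_pi u is sandwiched
   between gamma E_{s,pi s}(v_* - u) and gamma E_{s,a}(v_* - u) for an
   optimal action a; comparing two states gives the span contraction
   span(v_* - T_pi u) <= gamma span(v_* - u), and comparing with the fixed
   point v_pi gives the policy loss bound
   ||v_* - v_pi|| <= gamma/(1-gamma) span(v_* - u).
   Along AVI the first fact yields the recursion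
   span(v_* - v_{j+1}) <= gamma span(v_* - v_j) + span(eps_{j+1}),
   which a generic geometric-recursion lemma unrolls; the loss bound
   applied to v_{k-1} and pi_k then gives the theorem. *)

Section SpanSup.
Variables (R : realFieldType) (S : finType).
Implicit Types (f : S -> R).

Lemma span_ge f s s' : f s - f s' <= spanf f.
Proof.
rewrite /spanf; apply: le_trans (le_bigmax _ _ s).
exact: (le_bigmax _ (fun s' => f s - f s') s').
Qed.

Lemma span_ge0 f : 0 <= spanf f.
Proof. exact: bigmax_ge_id. Qed.

Lemma span_le f c : 0 <= c -> (forall s s', f s - f s' <= c) -> spanf f <= c.
Proof.
move=> c0 H; apply: bigmax_le => // s _; apply: bigmax_le => // s' _; exact: H.
Qed.

Lemma sup_ge f s : `|f s| <= supnorm f.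
Proof. exact: (le_bigmax _ (fun s => `|f s|) s). Qed.

Lemma sup_ge0 f : 0 <= supnorm f.
Proof. exact: bigmax_ge_id. Qed.

Lemma sup_le f c : 0 <= c -> (forall s, `|f s| <= c) -> supnorm f <= c.
Proof. move=> c0 H; apply: bigmax_le => // s _; exact: H. Qed.

End SpanSup.

Section Averages.
Variables (R : realFieldType) (S A : finType) (p : S -> A -> S -> R).
Hypothesis hp : stochastic p.

Definition avg (s : S) (a : A) (f : S -> R) : R := \sum_t p s a t * f t.

Lemma avgB s a f g : avg s a (fun t => f t - g t) = avg s a f - avg s a g.
Proof. rewrite /avg -sumrB; apply: eq_bigr => t _; exact: mulrBr. Qed.

Lemma avg_norm s a f : `|avg s a f| <= supnorm f.
Proof.
have [p0 p1] := hp.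
apply: le_trans (ler_norm_sum _ _ _) _.
apply: le_trans (_ : \sum_t p s a t * supnorm f <= _).
  apply: ler_sum => t _; rewrite normrM ger0_norm //.
  by apply: ler_wpM2l => //; exact: sup_ge.
by rewrite -mulr_suml p1 mul1r.
Qed.

(* Two averages differ by at most the span: write their difference as a
   double average of f t - f u under the product kernel. *)
Lemma avg_diff s a s' a' f : avg s a f - avg s' a' f <= spanf f.
Proof.
have [p0 p1] := hp.
have -> : avg s a f - avg s' a' f =
    \sum_t \sum_u p s a t * p s' a' u * (f t - f u).
  transitivity (\sum_t \sum_u (p s a t * f t) * p s' a' u
               - \sum_t \sum_u p s a t * (p s' a' u * f u)).
    under [X in _ = X - _]eq_bigr do rewrite -mulr_sumr p1 mulr1.
    under [X in _ = _ - X]eq_bigr do rewrite -mulr_sumr.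
    by rewrite -mulr_suml p1 mul1r.
  rewrite -sumrB; apply: eq_bigr => t _; rewrite -sumrB; apply: eq_bigr => u _.
  ring.
apply: le_trans (_ : \sum_t \sum_u p s a t * p s' a' u * spanf f <= _).
  apply: ler_sum => t _; apply: ler_sum => u _.
  by apply: ler_wpM2l; [exact: mulr_ge0 | exact: span_ge].
under eq_bigr do rewrite -mulr_suml -mulr_sumr p1 mulr1.
by rewrite -mulr_suml p1 mul1r.
Qed.

End Averages.

Lemma qvalB (R : realFieldType) (S A : finType) (r : S -> A -> R)
    (p : S -> A -> S -> R) (gamma : R) (f g : S -> R) s a :
  qval r p gamma f s a - qval r p gamma g s a
    = gamma * avg p s a (fun t => f t - g t).
Proof. rewrite avgB /qval /avg; ring. Qed.

Section GreedyStep.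
Variables (R : realFieldType) (S A : finType).
Variables (r : S -> A -> R) (p : S -> A -> S -> R) (gamma : R).
Hypotheses (hp : stochastic p) (hg0 : 0 <= gamma).
Variables (vstar u : S -> R) (pi : S -> A).
Hypotheses (hvstar : is_opt_value r p gamma vstar)
           (hgreedy : greedy r p gamma pi u).

Let d := fun s => vstar s - u s.

(* Lower half of the sandwich: v_* dominates the Q-value of pi s. *)
Lemma greedy_gap_lower s :
  gamma * avg p s (pi s) d <= vstar s - Tpol r p gamma pi u s.
Proof.
have [_ Hmax] := hvstar s.
by rewrite -(qvalB r) /Tpol lerD2r; exact: Hmax.
Qed.

(* Upper half: pi s beats the optimal action a of v_* on u. *)
Lemma greedy_gap_upper s :
  exists a, vstar s - Tpol r p gamma pi u s <= gamma * avg p s a d.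
Proof.
have [[a Ha] _] := hvstar s; have [_ Hgr] := hgreedy s.
by exists a; rewrite -(qvalB r) /Tpol {1}Ha lerD2l lerN2; exact: Hgr.
Qed.

Lemma greedy_span_contraction :
  spanf (fun s => vstar s - Tpol r p gamma pi u s) <= gamma * spanf d.
Proof.
apply: span_le => [|s s']; first by rewrite mulr_ge0 ?span_ge0.
have [a Hs] := greedy_gap_upper s; have Hs' := greedy_gap_lower s'.
have := ler_wpM2l hg0 (avg_diff hp s a s' (pi s') d); lra.
Qed.

Lemma avi_step_span (eps : S -> R) :
  spanf (fun s => vstar s - (Tpol r p gamma pi u s + eps s))
    <= gamma * spanf d + spanf eps.
Proof.
set T := fun s => vstar s - Tpol r p gamma pi u s.
have Hc : spanf T <= gamma * spanf d := greedy_span_contraction.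
apply: span_le => [|s s']; first by rewrite addr_ge0 ?mulr_ge0 ?span_ge0.
have := span_ge T s s'; have := span_ge eps s' s; rewrite /T; lra.
Qed.

Lemma greedy_policy_loss (vpi : S -> R) :
  gamma < 1 -> is_policy_value r p gamma pi vpi ->
  supnorm (fun s => vstar s - vpi s) <= gamma / (1 - gamma) * spanf d.
Proof.
move=> hg1 hvpi; set w := fun s => vstar s - vpi s; set N := supnorm w.
have hpt s : `|w s| <= gamma * spanf d + gamma * N.
  (* w s = (v_* - T_pi u)(s) + gamma E_{s,pi s}(w - d) *)
  have Hw : w s = vstar s - Tpol r p gamma pi u s
                  + gamma * (avg p s (pi s) w - avg p s (pi s) d).
    rewrite -avgB /w /d hvpi -[in RHS]/(Tpol r p gamma pi vpi s) /Tpol.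
    have -> : avg p s (pi s) (fun t => vstar t - vpi t - (vstar t - u t))
            = avg p s (pi s) (fun t => u t - vpi t).
      by apply: eq_bigr => t _; congr (_ * _); ring.
    by rewrite -(qvalB r); ring.
  have [a Hup] := greedy_gap_upper s; have Hlo := greedy_gap_lower s.
  have := ler_wpM2l hg0 (avg_diff hp s a s (pi s) d).
  have := avg_norm hp s (pi s) w; rewrite ler_norml => /andP[Hw1 Hw2].
  have := ler_wpM2l hg0 Hw1; have := ler_wpM2l hg0 Hw2.
  have := mulr_ge0 hg0 (span_ge0 d).
  rewrite ler_norml Hw -/N; move=> *; apply/andP; split; lra.
have hN : (1 - gamma) * N <= gamma * spanf d.
  suff : N <= gamma * spanf d + gamma * N by lra.
  apply: sup_le hpt; rewrite addr_ge0 ?mulr_ge0 ?span_ge0 ?sup_ge0 //.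
have g1 : 0 < 1 - gamma by rewrite subr_gt0.
by rewrite mulrAC ler_pdivlMr // mulrC.
Qed.

End GreedyStep.

Lemma geometric_bound (R : realFieldType) (gamma e : R) (x : nat -> R) n :
  0 <= gamma -> gamma != 1 ->
  (forall j, (j < n)%N -> x j.+1 <= gamma * x j + e) ->
  x n <= gamma ^+ n * x 0%N + (1 - gamma ^+ n) / (1 - gamma) * e.
Proof.
move=> hg0 hg1 hrec; have g1 : 1 - gamma != 0 by rewrite subr_eq0 eq_sym.
elim: n hrec => [|n IH] hrec; first by rewrite expr0 mul1r subrr !mul0r addr0.
apply: le_trans (hrec n (ltnSn n)) _.
have := ler_wpM2l hg0 (IH (fun j hj => hrec j (ltnW hj))).
have -> : gamma ^+ n.+1 * x 0%N + (1 - gamma ^+ n.+1) / (1 - gamma) * e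
        = gamma * (gamma ^+ n * x 0%N + (1 - gamma ^+ n) / (1 - gamma) * e) + e.
  by rewrite exprS; field.
lra.
Qed.

Theorem theorem1 (R : realFieldType) (S A : finType)
    (r : S -> A -> R) (p : S -> A -> S -> R) (gamma : R)
    (hp : stochastic p) (hg0 : 0 <= gamma) (hg1 : gamma < 1)
    (vstar : S -> R) (hvstar : is_opt_value r p gamma vstar)
    (k : nat) (hk : (1 <= k)%N)
    (v : nat -> S -> R) (pi : nat -> S -> A) (eps : nat -> S -> R)
    (hgreedy : forall j : nat, (j < k)%N -> greedy r p gamma (pi j.+1) (v j))
    (hupd : forall j : nat, (j.+1 < k)%N ->
        v j.+1 = (fun s => Tpol r p gamma (pi j.+1) (v j) s + eps j.+1 s))
    (vpik : S -> R) (hvpik : is_policy_value r p gamma (pi k) vpik) :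
  let e := \big[Num.max/0]_(1 <= j < k) spanf (eps j) in
  supnorm (fun s => vstar s - vpik s)
    <= (1 - gamma)^-1 *
       ((gamma - gamma ^+ k) / (1 - gamma) * e
        + gamma ^+ k * spanf (fun s => vstar s - v 0%N s)).
Proof.
cbv zeta; set e := \big[Num.max/0]_(1 <= j < k) spanf (eps j).
have [k' Ek] : exists k', k = k'.+1 by exists k.-1; rewrite prednK.
subst k; set x := fun j => spanf (fun s => vstar s - v j s).
have g1 : 1 - gamma != 0 by rewrite subr_eq0 eq_sym lt_eqF.
have he j : (1 <= j < k'.+1)%N -> spanf (eps j) <= e.
  by move=> hj; rewrite /e (bigD1_seq j) ?mem_index_iota ?iota_uniq //= le_max lexx.
have hrec j : (j < k')%N -> x j.+1 <= gamma * x j + e.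
  move=> hj; rewrite /x (hupd j hj).
  apply: le_trans (avi_step_span hp hg0 hvstar (hgreedy j (ltnW hj)) _) _.
  by rewrite lerD2l he.
have hx := geometric_bound hg0 (negbT (lt_eqF hg1)) hrec.
have -> : (1 - gamma)^-1 * ((gamma - gamma ^+ k'.+1) / (1 - gamma) * e
                            + gamma ^+ k'.+1 * x 0%N)
        = gamma / (1 - gamma) *
          (gamma ^+ k' * x 0%N + (1 - gamma ^+ k') / (1 - gamma) * e).
  by rewrite exprS; field.
apply: le_trans (greedy_policy_loss hp hg0 hvstar (hgreedy k' (ltnSn k')) hg1 hvpik) _.
by rewrite ler_wpM2l // divr_ge0 // subr_ge0 ltW.
Qed.
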